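(* Let $(\alpha_n)_{n\ge0}$ be complex numbers with $|\alpha_n|<1$ and let $\mu_{n,r,s}$ be as in the context. For all nonnegative integers $n,r,s$, \[ \mu_{n,r,s}=\sum_{p\in\mathfrak{L}_{n,r,s}}\mathrm{wt}_L(p). \]
   Context: For a polynomial $f(z)=\sum_{k=0}^n a_kz^k$ of degree $n$, write $\overline{f}(z)=\sum_k\overline{a_k}z^k$ and $f^*(z)=z^n\overline{f}(1/z)$. Define monic $\Phi_n$ by $\Phi_0=1$, $\Phi_{n+1}(z)=z\Phi_n(z)-\overline{\alpha_n}\Phi_n^*(z)$. Let $\mathcal{L}$ be the unique linear functional on Laurent polynomials with $\mathcal{L}(1)=1$ and $\mathcal{L}(\Phi_m(z)\overline{\Phi_n}(1/z))=0$ for $m\neq n$; set $\langle f,g\rangle=\mathcal{L}(f(z)\overline{g}(1/z))$ and $\mu_{n,r,s}=\langle\Phi_s(z),z^n\Phi_r(z)\rangle/\langle\Phi_s,\Phi_s\rangle$. Set $\alpha_{-1}=-1$. A Łukasiewicz path is a finite sequence of lattice points in $\mathbb{Z}\times\mathbb{Z}_{\ge0}$ whose steps are of the form $(1,k)$ with $k\le 1$ integer; $\mathfrak{L}_{n,r,s}$ is the set of such paths from $(0,r)$ to $(n,s)$. The weight $\mathrm{wt}_L(p)$ is the product of the weights of the steps, where an up-step $(a,b)\to(a+1,b+1)$ has weight $1$ and a step $(a,b)\to(a+1,b-k)$, $k=0,1,\dots,b$, has weight $-\alpha_b\overline{\alpha_{b-k-1}}\prod_{j=b-k}^{b-1}(1-|\alpha_j|^2)$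 (the empty product being $1$). *)

From mathcomp Require Import all_boot all_algebra complex.
From mathcomp Require Import reals.
Set Implicit Arguments. Unset Strict Implicit. Unset Printing Implicit Defensive.
Import GRing.Theory Num.Theory.
Local Open Scope ring_scope.

Section OPUC.
Variable R : realType.
Local Notation C := (R[i]).
Variable alpha : nat -> C.

(* f^*(z) = z^n \bar f(1/z) for a polynomial f of degree n *)
Definition rev_star (n : nat) (f : {poly C}) : {poly C} :=
  \poly_(k < n.+1) (f`_(n - k))^*.

Fixpoint Phi (n : nat) : {poly C} :=
  match n with
  | 0 => 1
  | m.+1 => 'X * Phi m - (alpha m)^* *: rev_star m (Phi m)
  end.

(* A linear functional L on Laurent polynomials is given by its moments
   c k = L(z^k), k : int.  ip c f g = L(f(z) * \bar g(1/z)) = <f,g>. *)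
Definition ip (c : int -> C) (f g : {poly C}) : C :=
  \sum_(i < size f) \sum_(j < size g)
     f`_i * (g`_j)^* * c (i%:Z - j%:Z).

Definition mu (c : int -> C) (n r s : nat) : C :=
  ip c (Phi s) ('X^n * Phi r) / ip c (Phi s) (Phi s).

(* conj(alpha_j) with the convention alpha_{-1} = -1; the argument is j+1 *)
Definition conj_alpha_shift (j1 : nat) : C :=
  if j1 is j.+1 then (alpha j)^* else -1.

Definition step_wt (b b' : nat) : C :=
  if b' == b.+1 then 1
  else - alpha b * conj_alpha_shift b'
       * \prod_(b' <= j < b) (1 - `|alpha j| ^+ 2).

(* Lukasiewicz paths from (0,r) to (n,s), as height functions
   h : {0..n} -> {0..r+n}  (every such path has heights <= r+n). *)
Definition is_luk (n r s : nat) (h : {ffun 'I_n.+1 -> 'I_(r + n).+1}) : bool :=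
  [&& (h ord0 : nat) == r, (h ord_max : nat) == s &
      [forall i : 'I_n, ((h (lift ord0 i) : nat) <= (h (widen_ord (leqnSn n) i)).+1)%N]].

Definition wt_L (n r : nat) (h : {ffun 'I_n.+1 -> 'I_(r + n).+1}) : C :=
  \prod_(i < n) step_wt (h (widen_ord (leqnSn n) i)) (h (lift ord0 i)).

End OPUC.

From mathcomp Require Import all_boot all_algebra complex.
From mathcomp Require Import reals.
From mathcomp Require Import ring zify.
Set Implicit Arguments. Unset Strict Implicit. Unset Printing Implicit Defensive.
Import GRing.Theory Num.Theory.
Local Open Scope ring_scope.

(* Multiplication by z maps Phi_n into the span of Phi_0, ..., Phi_{n+1}.
   Szego's recursion gives z Phi_n = Phi_{n+1} + conj(alpha_n) Phi_n^*, and
   Phi_n^* = sum_{t <= n} -alpha_{t-1} prod_{t <= j < n} (1 - |alpha_j|^2) Phi_t,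
   so z Phi_n = sum_{t <= n+1} conj(w(n,t)) Phi_t with w the weight of the
   Lukasiewicz step from height n to height t.  Iterating, z^n Phi_r is
   sum_s conj(W_n(r,s)) Phi_s, where W_n(r,s) = sum_t w(r,t) W_{n-1}(t,s) is the
   total weight of the paths of length n from r to s.  Orthogonality turns
   <Phi_s, z^n Phi_r> into W_n(r,s) <Phi_s, Phi_s>, and
   <Phi_s, Phi_s> = prod_{j < s} (1 - |alpha_j|^2) is nonzero. *)

Lemma big_ord_narrow0 (V : nmodType) n N (F : 'I_N -> V) (nN : (n <= N)%N) :
  (forall i : 'I_N, (n <= i)%N -> F i = 0) ->
  \sum_(i < N) F i = \sum_(i < n) F (widen_ord nN i).
Proof.
move=> F0; rewrite (bigID (fun i : 'I_N => (i < n)%N)) /= big_ord_narrow.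
by rewrite [X in _ + X]big1 ?addr0 // => i; rewrite -leqNgt; apply: F0.
Qed.

Section Sesquilinear.
Variables (R : realType) (c : int -> R[i]).
Local Notation C := R[i].

Definition ip_upto (N : nat) (f g : {poly C}) : C :=
  \sum_(i < N) \sum_(j < N) f`_i * (g`_j)^* * c (i%:Z - j%:Z).

Lemma ip_uptoE N (f g : {poly C}) :
  (size f <= N)%N -> (size g <= N)%N -> ip c f g = ip_upto N f g.
Proof.
move=> fN gN; rewrite /ip /ip_upto (big_ord_narrow0 fN) => [|i fi]; last first.
  by rewrite big1 // => j _; rewrite nth_default ?mul0r.
apply: eq_bigr => i _; rewrite (big_ord_narrow0 gN) // => j gj.
by rewrite [g`_j]nth_default ?conjC0 ?mulr0 ?mul0r.
Qed.

Lemma ip_uptoDl N (f g h : {poly C}) :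
  ip_upto N (f + g) h = ip_upto N f h + ip_upto N g h.
Proof.
rewrite /ip_upto -big_split; apply: eq_bigr => i _; rewrite -big_split.
by apply: eq_bigr => j _; rewrite coefD !mulrDl.
Qed.

Lemma ip_uptoDr N (f g h : {poly C}) :
  ip_upto N f (g + h) = ip_upto N f g + ip_upto N f h.
Proof.
rewrite /ip_upto -big_split; apply: eq_bigr => i _; rewrite -big_split.
by apply: eq_bigr => j _; rewrite coefD rmorphD /= !mulrDr !mulrDl.
Qed.

Lemma ip_uptoZl N a (f h : {poly C}) : ip_upto N (a *: f) h = a * ip_upto N f h.
Proof.
rewrite /ip_upto mulr_sumr; apply: eq_bigr => i _; rewrite mulr_sumr.
by apply: eq_bigr => j _; rewrite coefZ !mulrA.
Qed.

Lemma ip_uptoZr N a (f h : {poly C}) : ip_upto N f (a *: h) = a^* * ip_upto N f h.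
Proof.
rewrite /ip_upto mulr_sumr; apply: eq_bigr => i _; rewrite mulr_sumr.
by apply: eq_bigr => j _; rewrite coefZ rmorphM /=; ring.
Qed.

Lemma ipDl (f g h : {poly C}) : ip c (f + g) h = ip c f h + ip c g h.
Proof.
have := size_polyD f g; set N := (size f + size g + size h)%N => fgN.
by rewrite !(ip_uptoE (N := N)) ?ip_uptoDl //; lia.
Qed.

Lemma ipDr (f g h : {poly C}) : ip c f (g + h) = ip c f g + ip c f h.
Proof.
have := size_polyD g h; set N := (size f + size g + size h)%N => ghN.
by rewrite !(ip_uptoE (N := N)) ?ip_uptoDr //; lia.
Qed.

Lemma ipZl a (f h : {poly C}) : ip c (a *: f) h = a * ip c f h.
Proof.
have := size_scale_leq a f; set N := (size f + size h)%N => afN.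
by rewrite !(ip_uptoE (N := N)) ?ip_uptoZl //; lia.
Qed.

Lemma ipZr a (f h : {poly C}) : ip c f (a *: h) = a^* * ip c f h.
Proof.
have := size_scale_leq a h; set N := (size f + size h)%N => ahN.
by rewrite !(ip_uptoE (N := N)) ?ip_uptoZr //; lia.
Qed.

Lemma ip0l (h : {poly C}) : ip c 0 h = 0.
Proof. by rewrite -(scale0r 0) ipZl mul0r. Qed.

Lemma ip0r (h : {poly C}) : ip c h 0 = 0.
Proof. by rewrite -(scale0r 0) ipZr conjC0 mul0r. Qed.

Lemma ipBl (f g h : {poly C}) : ip c (f - g) h = ip c f h - ip c g h.
Proof. by rewrite -scaleN1r ipDl ipZl mulN1r. Qed.

Lemma ipBr (f g h : {poly C}) : ip c f (g - h) = ip c f g - ip c f h.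
Proof. by rewrite -scaleN1r ipDr ipZr conjCN1 mulN1r. Qed.

Lemma ip_suml I (r : seq I) (P : pred I) (F : I -> {poly C}) (h : {poly C}) :
  ip c (\sum_(i <- r | P i) F i) h = \sum_(i <- r | P i) ip c (F i) h.
Proof. exact: (big_morph _ (fun f g => ipDl f g h) (ip0l h)). Qed.

Lemma ip_sumr I (r : seq I) (P : pred I) (f : {poly C}) (F : I -> {poly C}) :
  ip c f (\sum_(i <- r | P i) F i) = \sum_(i <- r | P i) ip c f (F i).
Proof. exact: (big_morph _ (ipDr f) (ip0r f)). Qed.

Lemma ip_mulX (f g : {poly C}) : ip c ('X * f) ('X * g) = ip c f g.
Proof.
have Xf := size_polyMleq 'X f; have Xg := size_polyMleq 'X g.
rewrite size_polyX in Xf Xg; set N := (size f + size g)%N.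
rewrite (ip_uptoE (N := N.+1)) ?(ip_uptoE (N := N)) /ip_upto; try lia.
rewrite big_ord_recl big1 ?add0r => [|j _]; last by rewrite coefXM eqxx !mul0r.
apply: eq_bigr => i _; rewrite big_ord_recl !coefXM /= conjC0 mulr0 mul0r add0r.
apply: eq_bigr => j _; rewrite !coefXM /= /bump !add0n !add1n.
by rewrite !intS opprD addrACA subrr add0r.
Qed.

Lemma ip_rev_star n (f g : {poly C}) : (size f <= n.+1)%N -> (size g <= n.+1)%N ->
  ip c (rev_star n f) (rev_star n g) = ip c g f.
Proof.
move=> fn gn; rewrite !(ip_uptoE (N := n.+1)) ?size_poly // /ip_upto exchange_big.
rewrite (reindex_inj rev_ord_inj); apply: eq_bigr => j _.
rewrite (reindex_inj rev_ord_inj); apply: eq_bigr => i _.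
have [ilt jlt] := (ltn_ord i, ltn_ord j).
rewrite /rev_star !coef_poly /= !subSS !(leq_ltn_trans (leq_subr _ _) (ltnSn n)).
by rewrite !subKn // conjCK -!subzn // opprB addrC addrA subrK; ring.
Qed.

End Sesquilinear.

Section RevStar.
Variable R : realType.
Local Notation C := R[i].

Lemma rev_starD n (f g : {poly C}) : rev_star n (f + g) = rev_star n f + rev_star n g.
Proof.
by apply/polyP => k; rewrite coefD !coef_poly; case: ifP; rewrite ?addr0 // coefD rmorphD.
Qed.

Lemma rev_starZ n a (f : {poly C}) : rev_star n (a *: f) = a^* *: rev_star n f.
Proof.
by apply/polyP => k; rewrite coefZ !coef_poly; case: ifP; rewrite ?mulr0 // coefZ rmorphM.
Qed.

Lemma rev_star_mulX n (f : {poly C}) :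
  (size f <= n.+1)%N -> rev_star n.+1 ('X * f) = rev_star n f.
Proof.
move=> fn; apply/polyP => k; rewrite !coef_poly coefXM.
case: (ltngtP k n.+1) => [kn|nk|->]; last by rewrite ltnSn subnn eqxx conjC0.
- by rewrite ltnS ltnW // ifF; [congr (f`_ _)^*|apply/eqP]; lia.
- by rewrite ltnNge nk.
Qed.

Lemma rev_star_rev_star n (f : {poly C}) :
  (size f <= n.+1)%N -> rev_star n.+1 (rev_star n f) = 'X * f.
Proof.
move=> fn; apply/polyP => -[|k]; rewrite !coef_poly coefXM /=.
  by rewrite subn0 ltnn conjC0.
rewrite !ltnS; case: (leqP k n) => kn; last by rewrite nth_default //; apply: leq_trans kn.
rewrite subSS leq_subr conjCK; congr f`_ _; lia.
Qed.

End RevStar.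

Section Szego.
Variables (R : realType) (alpha : nat -> R[i]).
Local Notation C := R[i].
Local Notation Phi := (Phi alpha).

Lemma size_Phi n : (size (Phi n) <= n.+1)%N.
Proof.
elim: n => [|n IH] /=; first by rewrite size_poly1.
have := size_polyMleq 'X (Phi n); rewrite size_polyX => XPhi.
apply: leq_trans (size_polyD _ _) _; rewrite size_polyN geq_max.
by rewrite (leq_trans XPhi) // (leq_trans (size_scale_leq _ _)) // (leq_trans (size_poly _ _)).
Qed.

Lemma mulX_Phi n : 'X * Phi n = Phi n.+1 + (alpha n)^* *: rev_star n (Phi n).
Proof. by rewrite /= subrK. Qed.

Lemma rev_star_PhiS n :
  rev_star n.+1 (Phi n.+1) = rev_star n (Phi n) - alpha n *: ('X * Phi n).
Proof.
rewrite /= -scaleNr rev_starD rev_starZ rev_star_mulX ?size_Phi //.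
by rewrite rev_star_rev_star ?size_Phi // rmorphN /= conjCK scaleNr.
Qed.

Definition star_coef n t : C :=
  - (conj_alpha_shift alpha t)^* * \prod_(t <= j < n) (1 - `|alpha j| ^+ 2).

Lemma rev_star_Phi_expansion n :
  rev_star n (Phi n) = \sum_(t < n.+1) star_coef n t *: Phi t.
Proof.
elim: n => [|n IH].
  rewrite big_ord1 /star_coef big_geq // mulr1 conjCN1 opprK scale1r.
  apply/polyP => -[|k]; rewrite coef_poly !coef1 //=.
  by rewrite (conjC_nat _ 1).
rewrite rev_star_PhiS big_ord_recr /=.
have -> : star_coef n.+1 n.+1 = - alpha n.
  by rewrite /star_coef /= big_geq // mulr1 conjCK.
have -> : \sum_(t < n.+1) star_coef n.+1 t *: Phi t =
          (1 - `|alpha n| ^+ 2) *: rev_star n (Phi n).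
  rewrite IH scaler_sumr; apply: eq_bigr => t _; rewrite scalerA /star_coef.
  rewrite big_nat_recr /=; last by rewrite -ltnS ltn_ord.
  by rewrite mulrA mulrC.
rewrite scalerBr scalerA mulNr !scaleNr opprK normCK scalerBl scale1r.
by rewrite addrCA subrK addrC.
Qed.

Lemma mulX_Phi_expansion n :
  'X * Phi n = \sum_(t < n.+2) (step_wt alpha n t)^* *: Phi t.
Proof.
rewrite [RHS]big_ord_recr /= {2}/step_wt eqxx conjC1 scale1r.
have -> : \sum_(t < n.+1) (step_wt alpha n t)^* *: Phi t =
          (alpha n)^* *: rev_star n (Phi n).
  rewrite rev_star_Phi_expansion scaler_sumr; apply: eq_bigr => t _.
  rewrite scalerA /step_wt /star_coef ltn_eqF // !rmorphM rmorphN rmorph_prod /=.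
  under eq_bigr do rewrite rmorphB rmorph1 rmorphXn /= conj_normC.
  by rewrite !mulNr mulrN mulrA.
by rewrite addrC subrK.
Qed.

End Szego.

Section FfunCons.
Variables (T : finType) (n : nat).

Definition ffun_cons (x : T) (g : {ffun 'I_n.+1 -> T}) : {ffun 'I_n.+2 -> T} :=
  [ffun i => if unlift ord0 i is Some j then g j else x].

Definition ffun_behead (h : {ffun 'I_n.+2 -> T}) : {ffun 'I_n.+1 -> T} :=
  [ffun j => h (lift ord0 j)].

Lemma ffun_cons0 x g : ffun_cons x g ord0 = x.
Proof. by rewrite ffunE unlift_none. Qed.

Lemma ffun_consS x g j : ffun_cons x g (lift ord0 j) = g j.
Proof. by rewrite ffunE liftK. Qed.

Lemma ffun_consK x : cancel (ffun_cons x) ffun_behead.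
Proof. by move=> g; apply/ffunP => j; rewrite ffunE ffun_consS. Qed.

Lemma ffun_beheadK (h : {ffun 'I_n.+2 -> T}) : ffun_cons (h ord0) (ffun_behead h) = h.
Proof.
by apply/ffunP => i; rewrite ffunE; case: (unliftP ord0 i) => [j ->|->]; rewrite ?ffunE.
Qed.

Lemma widen_ord_ord0 : widen_ord (leqnSn n.+1) ord0 = ord0.
Proof. exact: val_inj. Qed.

Lemma widen_ord_lift0 (j : 'I_n) :
  widen_ord (leqnSn n.+1) (lift ord0 j) = lift ord0 (widen_ord (leqnSn n) j).
Proof. exact: val_inj. Qed.

Lemma forall_ord_recl (P : pred 'I_n.+1) :
  [forall i, P i] = P ord0 && [forall j : 'I_n, P (lift ord0 j)].
Proof.
apply/forallP/andP => [Pi|[P0 /forallP PS] i]; first by split=> //; apply/forallP.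
by case: (unliftP ord0 i) => [j ->|->].
Qed.

End FfunCons.

Section LukasiewiczPaths.
Variables (F : pzSemiRingType) (a : nat -> nat -> F).

Fixpoint walk_sum (n r s : nat) : F :=
  if n is m.+1 then \sum_(t < r.+2) a r t * walk_sum m t s else (r == s)%:R.

(* Heights are bounded by an arbitrary [B] instead of [r + n] as in [is_luk],
   so that the bound survives removing the first step of a path. *)
Definition luk_path n B r s (h : {ffun 'I_n.+1 -> 'I_B.+1}) : bool :=
  [&& (h ord0 : nat) == r, (h ord_max : nat) == s &
      [forall i : 'I_n, ((h (lift ord0 i) : nat) <= (h (widen_ord (leqnSn n) i)).+1)%N]].

Definition path_weight n B (h : {ffun 'I_n.+1 -> 'I_B.+1}) : F :=
  \prod_(i < n) a (h (widen_ord (leqnSn n) i)) (h (lift ord0 i)).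

Lemma luk_path_cons n B r s x (g : {ffun 'I_n.+1 -> 'I_B.+1}) :
  luk_path r s (ffun_cons x g) =
  [&& (x : nat) == r, ((g ord0 : nat) <= x.+1)%N & luk_path (g ord0) s g].
Proof.
rewrite /luk_path forall_ord_recl widen_ord_ord0.
have -> : @ord_max n.+1 = lift ord0 ord_max by apply: val_inj.
rewrite ffun_cons0 !ffun_consS.
under eq_forallb => j do rewrite widen_ord_lift0 !ffun_consS.
by rewrite eqxx /=; case: (_ == s); rewrite ?andbF.
Qed.

Lemma path_weight_cons n B x (g : {ffun 'I_n.+1 -> 'I_B.+1}) :
  path_weight (ffun_cons x g) = a x (g ord0) * path_weight g.
Proof.
rewrite /path_weight big_ord_recl widen_ord_ord0 ffun_cons0 ffun_consS.
by congr (_ * _); apply: eq_bigr => i _; rewrite widen_ord_lift0 !ffun_consS.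
Qed.

Lemma sum_path_weight0 B r s : (r <= B)%N ->
  \sum_(h : {ffun 'I_1 -> 'I_B.+1} | luk_path r s h) path_weight h = (r == s)%:R.
Proof.
move=> rB; rewrite (eq_bigl (fun h => (h == [ffun=> inord r]) && (r == s))) => [|h].
  case: eqP => _; last by rewrite big_pred0 // => h; rewrite andbF.
  by rewrite (eq_bigl _ _ (fun h => andbT _)) big_pred1_eq /path_weight big_ord0.
have -> : (h == [ffun=> inord r]) = ((h ord0 : nat) == r).
  apply/eqP/eqP => [->|h0]; first by rewrite ffunE inordK.
  by apply/ffunP => i; rewrite ffunE (ord1 i); apply/val_inj; rewrite /= inordK.
rewrite /luk_path (ord1 ord_max); case: forallP => [_|[] [] //].
by rewrite andbT; case: eqP => // ->.
Qed.

Lemma sum_path_weightS n B r s : (r < B)%N ->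
  \sum_(h : {ffun 'I_n.+2 -> 'I_B.+1} | luk_path r s h) path_weight h =
  \sum_(t < r.+2) a r t *
    \sum_(g : {ffun 'I_n.+1 -> 'I_B.+1} | luk_path t s g) path_weight g.
Proof.
move=> rB; have [rB1 rB2] : (r < B.+1)%N /\ (r.+2 <= B.+1)%N by split; lia.
rewrite (reindex_onto (ffun_cons (inord r)) (@ffun_behead _ _)) => [|h /andP[/eqP h0 _]];
  last by rewrite -[inord r](_ : h ord0 = _) ?ffun_beheadK //; apply/val_inj; rewrite /= inordK.
rewrite (eq_bigl (fun g : {ffun 'I_n.+1 -> 'I_B.+1} =>
                    ((g ord0 : nat) < r.+2)%N && luk_path (g ord0) s g)) => [|g];
  last by rewrite luk_path_cons ffun_consK inordK // !eqxx andbT.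
under eq_bigr do rewrite path_weight_cons inordK //.
rewrite (partition_big (fun g : {ffun 'I_n.+1 -> 'I_B.+1} => g ord0)
                       (fun t : 'I_B.+1 => (t < r.+2)%N)) => [|g /andP[]//].
rewrite (big_ord_narrow rB2); apply: eq_bigr => t _; rewrite mulr_sumr.
apply: eq_big => [g|g /andP[_ /eqP ->] //].
apply/idP/idP => [/andP[/andP[_ lp] /eqP g0] | lp]; first by move: lp; rewrite g0.
have g0 : g ord0 = widen_ord rB2 t by apply/val_inj; case/and3P: lp => /eqP.
by rewrite g0 eqxx andbT /= ltn_ord.
Qed.

Lemma sum_path_weight n B r s : (r + n <= B)%N ->
  \sum_(h : {ffun 'I_n.+1 -> 'I_B.+1} | luk_path r s h) path_weight h = walk_sum n r s.
Proof.
elim: n r => [|n IH] r rnB; first by apply: sum_path_weight0; rewrite addn0 in rnB.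
rewrite sum_path_weightS /=; last by lia.
by apply: eq_bigr => t _; rewrite IH //; have := ltn_ord t; lia.
Qed.

End LukasiewiczPaths.

Lemma walk_sum_rmorph (F F' : pzSemiRingType) (f : {rmorphism F -> F'}) a b :
  (forall t u, f (a t u) = b t u) ->
  forall n r s, f (walk_sum a n r s) = walk_sum b n r s.
Proof.
move=> fab; elim=> [|n IH] r s /=; first by rewrite rmorph_nat.
by rewrite rmorph_sum; apply: eq_bigr => t _; rewrite rmorphM fab IH.
Qed.

Section Transfer.
Variables (F : comNzRingType) (P : nat -> {poly F}) (a : nat -> nat -> F).
Hypothesis mulXP : forall t, 'X * P t = \sum_(u < t.+2) a t u *: P u.

Lemma mulXn_expansion n r N : (r + n < N)%N ->
  'X^n * P r = \sum_(s < N) walk_sum a n r s *: P s.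
Proof.
elim: n r => [|n IH] r rnN.
  rewrite addn0 in rnN; rewrite expr0 mul1r (bigD1 (Ordinal rnN)) //= eqxx scale1r.
  rewrite big1 ?addr0 // => s; rewrite -val_eqE /= eq_sym => /negbTE ->.
  exact: scale0r.
have expand (t : 'I_r.+2) : 'X^n * (a r t *: P t) =
                             \sum_(s < N) (a r t * walk_sum a n t s) *: P s.
  rewrite -scalerAr IH; last by have := ltn_ord t; lia.
  by rewrite scaler_sumr; apply: eq_bigr => s _; rewrite scalerA.
rewrite exprSr -mulrA mulXP mulr_sumr (eq_bigr _ (fun t _ => expand t)) exchange_big.
by apply: eq_bigr => s _; rewrite -scaler_suml.
Qed.

End Transfer.

Section Orthogonality.
Variables (R : realType) (alpha : nat -> R[i]) (c : int -> R[i]).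
Local Notation Phi := (Phi alpha).
Hypothesis Phi_orth : forall m n : nat, m <> n -> ip c (Phi m) (Phi n) = 0.

Lemma ip_Phi_expansion m N (b : nat -> R[i]) : (m < N)%N ->
  ip c (Phi m) (\sum_(t < N) b t *: Phi t) = (b m)^* * ip c (Phi m) (Phi m).
Proof.
move=> mN; rewrite ip_sumr (bigD1 (Ordinal mN)) //= ipZr big1 ?addr0 // => t.
by rewrite -val_eqE /= => tm; rewrite ipZr Phi_orth ?mulr0 //; apply/eqP; rewrite eq_sym.
Qed.

Lemma ip_Phi_lower m N (b : nat -> R[i]) : (N <= m)%N ->
  ip c (Phi m) (\sum_(t < N) b t *: Phi t) = 0.
Proof.
move=> Nm; rewrite ip_sumr big1 // => t _; rewrite ipZr Phi_orth ?mulr0 //.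
by have := ltn_ord t; lia.
Qed.

Lemma ip_lower_Phi m N (b : nat -> R[i]) : (N <= m)%N ->
  ip c (\sum_(t < N) b t *: Phi t) (Phi m) = 0.
Proof.
move=> Nm; rewrite ip_suml big1 // => t _; rewrite ipZl Phi_orth ?mulr0 //.
by have := ltn_ord t; lia.
Qed.

Hypothesis c0 : c 0 = 1.

Lemma ip_Phi_Phi n : ip c (Phi n) (Phi n) = \prod_(j < n) (1 - `|alpha j| ^+ 2).
Proof.
elim: n => [|n IH].
  rewrite big_ord0 /ip size_poly1 !big_ord1 coef1 /= (conjC_nat _ 1) !mul1r.
  by rewrite subrr c0.
set a := alpha n; set S := rev_star n (Phi n).
have PhiS : Phi n.+1 = 'X * Phi n - a^* *: S by [].
have S_Phi : ip c S (Phi n.+1) = 0 by rewrite /S rev_star_Phi_expansion ip_lower_Phi.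
have Phi_S : ip c (Phi n.+1) S = 0 by rewrite /S rev_star_Phi_expansion ip_Phi_lower.
have S_S : ip c S S = ip c (Phi n) (Phi n) by rewrite ip_rev_star ?size_Phi.
have S_XPhi : ip c S ('X * Phi n) = a * ip c (Phi n) (Phi n).
  by rewrite mulX_Phi ipDr ipZr conjCK S_Phi S_S add0r.
rewrite {2}PhiS ipBr ipZr Phi_S mulr0 subr0 {1}PhiS ipBl ipZl ip_mulX S_XPhi.
by rewrite big_ord_recr /= -IH normCK -/a; ring.
Qed.

End Orthogonality.

Theorem theorem3p4 (R : realType) (alpha : nat -> R[i])
  (halpha : forall k, `|alpha k| < 1)
  (c : int -> R[i])
  (hL1 : c 0 = 1)
  (hLorth : forall m n : nat, m <> n -> ip c (Phi alpha m) (Phi alpha n) = 0)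
  (n r s : nat) :
  mu alpha c n r s =
  \sum_(h : {ffun 'I_n.+1 -> 'I_(r + n).+1} | is_luk s h) wt_L alpha h.
Proof.
have rnN : (r + n < (r + n + s).+1)%N by lia.
have sN : (s < (r + n + s).+1)%N by lia.
have Phi_s_neq0 : ip c (Phi alpha s) (Phi alpha s) != 0.
  rewrite ip_Phi_Phi //; apply/prodf_neq0 => j _.
  by rewrite lt0r_neq0 // subr_gt0 exprn_ilt1.
pose a t u := (step_wt alpha t u)^*.
rewrite /mu (mulXn_expansion (a := a) (@mulX_Phi_expansion R alpha) rnN).
rewrite ip_Phi_expansion // mulfK //.
rewrite (walk_sum_rmorph (f := Num.conj) (b := step_wt alpha) (fun t u => conjCK _)).
by rewrite -(sum_path_weight _ _ (leqnn (r + n))).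
Qed.
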